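(* Let $b\ge 1$, and let $\boldsymbol{\Omega}\in\mathbb{R}^{b\times b}$ and $\widetilde{\mathbf r}\in\mathbb{R}^{b}$ be the matrix and vector defined in the context (arising from one inner loop of the GN-BP algorithm). Let $q_1,\dots,q_b\in\{0,1\}$ be a realization of independent $\mathrm{Ber}(p)$ random variables, and set $\mathbf Q=\mathrm{diag}(1-q_1,\dots,1-q_b)$, $\mathbf R=\mathrm{diag}(q_1,\dots,q_b)$. Let $0<\alpha_1<1$ and $\alpha_2=1-\alpha_1$. Define $$\bar{\mathbf r}=(\mathbf Q+\alpha_2\mathbf R)\,\widetilde{\mathbf r},\qquad \bar{\boldsymbol\Omega}=\mathbf Q\boldsymbol\Omega+\alpha_2\mathbf R\boldsymbol\Omega-\alpha_1\mathbf R,$$ and consider the damped mean-message iteration $\mathbf r_{\mathrm d}^{(\tau)}=\bar{\mathbf r}-\bar{\boldsymbol\Omega}\,\mathbf r_{\mathrm d}^{(\tau-1)}$, $\tau=1,2,\dots$. Then $\mathbf r_{\mathrm d}^{(\tau)}$ converges to a unique fixed point $\hat{\mathbf r}_{\mathrm d}=\lim_{\tau\to\infty}\mathbf r_{\mathrm d}^{(\tau)}$ for every initial point $\mathbf r_{\mathrm d}^{(0)}\in\mathbb{R}^b$ if and only if the spectral radius satisfies $\rho(\bar{\boldsymbol\Omega})<1$. Furthermore, in that case $\hat{\mathbf r}_{\mathrm d}=\hat{\mathbf r}_{\mathrm s}:=(\mathbf I+\boldsymbol\Omega)^{-1}\widetilde{\mathbf r}$, i.e., the fixed point coincides with the fixed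 point of the undamped synchronous iteration $\mathbf r_{\mathrm s}^{(\tau)}=\widetilde{\mathbf r}-\boldsymbol\Omega\,\mathbf r_{\mathrm s}^{(\tau-1)}$.
   Context: Setting (one inner loop of Gauss-Newton belief propagation for the linearized model $\mathbf r(\mathbf x^{(\nu)})=\mathbf J(\mathbf x^{(\nu)})\Delta\mathbf x+\mathbf u$): consider the bipartite subgraph of the factor graph consisting of variable nodes $\mathcal V$ (state increments $\Delta x_s$), indirect factor nodes $f_1,\dots,f_m$ (one per indirect measurement with residual $r_i$ and variance $v_i>0$), and the set $\mathcal B$ of edges between them, $b=|\mathcal B|$; $f_i$ has degree $d_i$, and edges are ordered grouped by factor node ($f_1$'s edges first, etc.). Vectors in $\mathbb R^b$ are indexed by edges. Definitions: $\mathbf C=\mathrm{diag}$ of the (nonzero) Jacobian coefficients $C_{\Delta x_p}=\partial h_i/\partial x_p$ on each edge $(f_i,\Delta x_p)$. $\boldsymbol\Pi=\mathrm{blockdiag}(\mathbf\Pi_1,\dots,\mathbf\Pi_m)$ with $\mathbf\Pi_i=\mathbf 1_{d_i\times d_i}-\mathbf I_{d_i}$. $\mathbf D=\mathbf C^{-1}\boldsymbol\Pi\mathbf C$. $\boldsymbol\Gamma\in\{0,1\}^{b\times b}$ has entry $1$ at (edge $(f_i,\Delta x_q)$, edge $(f_j,\Delta x_{q'})$) iff $i\ne j$ and $q=q'$ (both edges incident to the same variable node), and $0$ otherwise. $\mathbf L$ is diagonal with entry on edge $(f_i,\Delta x_q)$ equal to the inverse variance of the message from the singly-connected (direct/virtual/slack)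 factor node attached to $\Delta x_q$; $\mathbf r_{\mathrm b}$ is the vector with entry on edge $(f_i,\Delta x_q)$ equal to the mean of that singly-connected factor node's message to $\Delta x_q$. $\mathbf r_{\mathrm a}$ has entry $r_i$ on every edge of $f_i$. $\hat{\boldsymbol\Sigma}_{\mathrm s}=\mathrm{diag}(\hat{\mathbf v}_{\mathrm s})$, where $\hat{\mathbf v}_{\mathrm s}>0$ is the limit of the factor-to-variable message variances. $\hat{\mathbf A}=\boldsymbol\Gamma\hat{\boldsymbol\Sigma}_{\mathrm s}^{-1}\boldsymbol\Gamma^{\mathrm T}+\mathbf L$, and for a square matrix $\mathbf A$, $\mathfrak D(\mathbf A)=\mathrm{diag}(A_{11},\dots,A_{bb})$. Then $\boldsymbol\Omega=\mathbf D\,(\mathfrak D(\hat{\mathbf A}))^{-1}\boldsymbol\Gamma\hat{\boldsymbol\Sigma}_{\mathrm s}^{-1}$ and $\widetilde{\mathbf r}=\mathbf C^{-1}\mathbf r_{\mathrm a}-\mathbf D\,(\mathfrak D(\hat{\mathbf A}))^{-1}\mathbf L\,\mathbf r_{\mathrm b}$. *)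

From mathcomp Require Import all_boot all_order all_algebra.
From mathcomp Require Import all_classical all_reals all_analysis.
From mathcomp Require Import complex.
Import Order.TTheory GRing.Theory Num.Theory.
Import numFieldTopology.Exports numFieldNormedType.Exports.

Set Implicit Arguments.
Unset Strict Implicit.
Unset Printing Implicit Defensive.

Local Open Scope ring_scope.
Local Open Scope classical_set_scope.

(* Bipartite subgraph of the factor graph:
   - variable nodes 'I_n, indirect factor nodes 'I_m, edges 'I_b;
   - [fac e] is the factor node of edge e, [var e] its variable node. *)

Section GNBP.
Context {R : realType}.
Variables (n m b : nat).
Variables (fac : 'I_b -> 'I_m) (var : 'I_b -> 'I_n).

Definition edges_grouped := forall e e' : 'I_b, (e <= e')%N -> (fac e <= fac e')%N.
Definition edges_simple :=
  forall e e' : 'I_b, fac e = fac e' -> var e = var e' -> e = e'.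
Definition factors_nonisolated := forall i : 'I_m, exists e : 'I_b, fac e = i.

(* C = diag of Jacobian coefficients on each edge *)
Definition Cmx (c : 'I_b -> R) : 'M[R]_b := diag_mx (\row_e c e).

(* Pi = blockdiag(1_{d_i x d_i} - I_{d_i}) *)
Definition Pimx : 'M[R]_b :=
  \matrix_(e, e') ((fac e == fac e') && (e != e'))%:R.

Definition Dmx (c : 'I_b -> R) : 'M[R]_b := invmx (Cmx c) *m Pimx *m Cmx c.

Definition Gammamx : 'M[R]_b :=
  \matrix_(e, e') ((fac e != fac e') && (var e == var e'))%:R.

(* L: inverse variance of the singly-connected factor message at var e *)
Definition Lmx (lam : 'I_n -> R) : 'M[R]_b := diag_mx (\row_e lam (var e)).

(* r_b: mean of the singly-connected factor message at var e *)
Definition rbvec (mu : 'I_n -> R) : 'cV[R]_b := \col_e mu (var e).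

(* r_a: residual r_i on every edge of f_i *)
Definition ravec (res : 'I_m -> R) : 'cV[R]_b := \col_e res (fac e).

Definition Sigmx (vs : 'I_b -> R) : 'M[R]_b := diag_mx (\row_e vs e).

Definition Ahat (lam : 'I_n -> R) (vs : 'I_b -> R) : 'M[R]_b :=
  Gammamx *m invmx (Sigmx vs) *m Gammamx^T + Lmx lam.

End GNBP.

Definition diagpart (R : pzRingType) (k : nat) (A : 'M[R]_k) : 'M[R]_k :=
  diag_mx (\row_i A i i).

Section GNBP2.
Context {R : realType}.
Variables (n m b : nat).
Variables (fac : 'I_b -> 'I_m) (var : 'I_b -> 'I_n).

Definition Omegamx (c : 'I_b -> R) (lam : 'I_n -> R) (vs : 'I_b -> R) : 'M[R]_b :=
  Dmx fac c *m invmx (diagpart (Ahat fac var lam vs)) *m Gammamx fac var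
    *m invmx (Sigmx vs).

Definition rtilde (c : 'I_b -> R) (lam mu : 'I_n -> R) (vs : 'I_b -> R)
  (res : 'I_m -> R) : 'cV[R]_b :=
  invmx (Cmx c) *m ravec fac res
  - Dmx fac c *m invmx (diagpart (Ahat fac var lam vs)) *m Lmx var lam
      *m rbvec var mu.

End GNBP2.

Definition Qmx (R : realType) (b : nat) (q : 'I_b -> bool) : 'M[R]_b :=
  diag_mx (\row_e (1 - (q e)%:R)).
Definition Rmx (R : realType) (b : nat) (q : 'I_b -> bool) : 'M[R]_b :=
  diag_mx (\row_e (q e)%:R).

Definition lin_iter (R : realType) (b : nat) (r : 'cV[R]_b) (W : 'M[R]_b)
  (x0 : 'cV[R]_b) (t : nat) : 'cV[R]_b :=
  iter t (fun x => r - W *m x) x0.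

Local Open Scope complex_scope.
Definition spectral_radius (R : realType) (k : nat) (A : 'M[R]_k) : R :=
  sup [set r : R | exists l : R[i],
         eigenvalue (map_mx (fun x : R => x%:C) A) l /\ Normc.normc l = r].

From mathcomp Require Import all_boot all_order all_algebra.
From mathcomp Require Import all_classical all_reals all_analysis.
From mathcomp Require Import complex.
From mathcomp Require Import ring lra.
Import Order.TTheory GRing.Theory Num.Theory.
Import numFieldTopology.Exports numFieldNormedType.Exports.

Set Implicit Arguments.
Unset Strict Implicit.
Unset Printing Implicit Defensive.

Local Open Scope ring_scope.
Local Open Scope classical_set_scope.

(** Damping rescales the fixed-point equation: I + Ombar = (Q + a2 R)(I + Om), and
    Q + a2 R is diagonal with entries 1 and a2 > 0.  Hence both iterations have the
    same fixed point, and the question reduces to the classical one for an affine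
    iteration x |-> r - W x, whose error after t steps is (-W)^t e_0.  If every
    complex eigenvalue of W has modulus < 1, Cayley-Hamilton writes the
    characteristic polynomial as a product of factors X - z with |z| < 1, and
    peeling them off one at a time turns ||(-W)^t v|| into a contraction perturbed
    by a null sequence.  Conversely, a left eigenvector for an eigenvalue of
    modulus >= 1 prevents (-W)^t from tending to 0. *)

Section Contraction.
Variable R : realType.

Lemma contraction_cvg0 (a e : nat -> R) (r : R) :
  0 <= r < 1 -> (forall t, 0 <= a t) -> (forall t, a t.+1 <= r * a t + e t) ->
  e @ \oo --> 0 -> a @ \oo --> 0.
Proof.
move=> /andP[r_ge0 r_lt1] a_ge0 a_rec e_cvg0; apply/cvgrPdist_lt => eps eps_gt0.
have delta_gt0 : 0 < eps * (1 - r) / 2 by rewrite !mulr_gt0 // ?subr_gt0 // invr_gt0.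
have [T _ e_small] := (cvgrPdist_lt _ _).1 e_cvg0 _ delta_gt0.
(* beyond T the errors are below eps (1 - r) / 2, so they accumulate to less than eps / 2 *)
have a_shift k : a (T + k)%N <= r ^+ k * a T + eps / 2.
  elim: k => [|k IHk]; first by rewrite addn0 expr0 mul1r lerDl divr_ge0 // ltW.
  rewrite addnS; apply: le_trans (a_rec _) _.
  have : `|0 - e (T + k)%N| < eps * (1 - r) / 2 by apply: e_small; rewrite /= leq_addr.
  rewrite sub0r normrN => /(le_lt_trans (ler_norm _)) /ltW e_le.
  apply: le_trans (lerD (ler_wpM2l r_ge0 IHk) e_le) _.
  rewrite exprS -mulrA; lra.
have r_norm : `|r| < 1 by rewrite ger0_norm.
have half_gt0 : 0 < eps / 2 by rewrite divr_gt0.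
have [K _ geo_small] := (cvgrPdist_lt _ _).1 (cvg_geometric (a T) r_norm) _ half_gt0.
exists (T + K)%N => // t /= le_TK_t.
have le_T_t : (T <= t)%N := leq_trans (leq_addr _ _) le_TK_t.
rewrite -(subnKC le_T_t) sub0r normrN ger0_norm //; apply: le_lt_trans (a_shift _) _.
have : `|0 - geometric (a T) r (t - T)%N| < eps / 2 by apply: geo_small; rewrite /= leq_subRL.
rewrite sub0r normrN /geometric /= => /(le_lt_trans (ler_norm _)).
rewrite mulrC; lra.
Qed.

End Contraction.

Section ComplexMatrixPowers.
Variable R : realType.
Local Notation C := R[i].
Local Notation normc := (@Normc.normc R).

Lemma normc_ge0 (x : C) : 0 <= normc x.
Proof. by case: x => a b; rewrite /Normc.normc sqrtr_ge0. Qed.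

Lemma normcX (x : C) t : normc (x ^+ t) = normc x ^+ t.
Proof. by elim: t => [|t IHt]; rewrite ?expr0 ?Normc.normc1 // !exprS Normc.normcM IHt. Qed.

Lemma normc_sum I (s : seq I) (F : I -> C) :
  normc (\sum_(i <- s) F i) <= \sum_(i <- s) normc (F i).
Proof.
elim/big_rec2: _ => [|i y z _ IH]; first by rewrite Normc.normc0.
exact: le_trans (le_normcD _ _) (lerD (lexx _) IH).
Qed.

Definition mx_normc1 k l (M : 'M[C]_(k, l)) : R := \sum_i \sum_j normc (M i j).

Lemma mx_normc1_ge0 k l (M : 'M[C]_(k, l)) : 0 <= mx_normc1 M.
Proof. by apply: sumr_ge0 => i _; apply: sumr_ge0 => j _; exact: normc_ge0. Qed.

Lemma mx_normc10 k l : mx_normc1 (0 : 'M[C]_(k, l)) = 0.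
Proof. by rewrite /mx_normc1 big1 // => i _; rewrite big1 // => j _; rewrite mxE Normc.normc0. Qed.

Lemma mx_normc1D k l (M N : 'M[C]_(k, l)) : mx_normc1 (M + N) <= mx_normc1 M + mx_normc1 N.
Proof.
rewrite /mx_normc1 -big_split; apply: ler_sum => i _.
by rewrite -big_split; apply: ler_sum => j _; rewrite mxE le_normcD.
Qed.

Lemma mx_normc1Z k l (z : C) (M : 'M[C]_(k, l)) : mx_normc1 (z *: M) = normc z * mx_normc1 M.
Proof.
rewrite /mx_normc1 mulr_sumr; apply: eq_bigr => i _; rewrite mulr_sumr.
by apply: eq_bigr => j _; rewrite mxE Normc.normcM.
Qed.

Lemma normc_le_mx_normc1 k l (M : 'M[C]_(k, l)) i j : normc (M i j) <= mx_normc1 M.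
Proof.
rewrite /mx_normc1 (bigD1 i) //= (bigD1 j) //= -addrA lerDl addr_ge0 //.
  by apply: sumr_ge0 => ? _; exact: normc_ge0.
by apply: sumr_ge0 => ? _; apply: sumr_ge0 => ? _; exact: normc_ge0.
Qed.

(* Peeling off one factor X - z: with w := (A - z) v, the norms of A^t v obey
   a(t+1) <= |z| a(t) + |A^t w|, a contraction perturbed by a null sequence. *)
Lemma mx_normc1_powers_cvg0_prod_XsubC k (A : 'M[C]_k.+1) (s : seq C) :
  (forall z, z \in s -> normc z < 1) ->
  forall v : 'cV[C]_k.+1, horner_mx A (\prod_(z <- s) ('X - z%:P)) *m v = 0 ->
  (fun t => mx_normc1 (A ^+ t *m v)) @ \oo --> 0.
Proof.
elim: s => [|z s IHs] s_lt1 v.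
  rewrite big_nil rmorph1 mul1mx => ->.
  under eq_fun do rewrite mulmx0 mx_normc10; exact: cvg_cst.
rewrite big_cons mulrC rmorphM /= -mulmxA rmorphB /= horner_mx_X horner_mx_C => Pv.
set w := (A - z%:M) *m v in Pv.
have w_cvg0 := IHs (fun y ys => s_lt1 y (mem_behead (s := z :: s) ys)) w Pv.
have powS t : A ^+ t.+1 *m v = A ^+ t *m w + z *: (A ^+ t *m v).
  by rewrite /w exprSr -mulmxE -mulmxA mulmxBl mulmxBr mul_scalar_mx scalemxAr subrK.
apply: (@contraction_cvg0 _ _ _ (normc z) _ _ _ w_cvg0) => [|t|t].
- by rewrite normc_ge0 s_lt1 ?mem_head.
- exact: mx_normc1_ge0.
- by rewrite powS addrC (le_trans (mx_normc1D _ _)) // mx_normc1Z.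
Qed.

Lemma mx_normc1_powers_cvg0 k (A : 'M[C]_k.+1) :
  (forall l, eigenvalue A l -> normc l < 1) ->
  forall v : 'cV[C]_k.+1, (fun t => mx_normc1 (A ^+ t *m v)) @ \oo --> 0.
Proof.
move=> eig_lt1 v; have [rs] := closed_field_poly_normal (char_poly A).
rewrite (monicP (char_poly_monic A)) scale1r => charE.
apply: (mx_normc1_powers_cvg0_prod_XsubC (s := rs)).
  by move=> z z_rs; apply: eig_lt1; rewrite eigenvalue_root_char charE root_prod_XsubC.
by rewrite -charE Cayley_Hamilton mul0mx.
Qed.

End ComplexMatrixPowers.

Section RealMatrixSpectrum.
Variable R : realType.
Local Notation normc := (@Normc.normc R).
Local Notation cm := (map_mx (real_complex R)).

Definition spectrum_lt1 k (W : 'M[R]_k) :=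
  forall l, eigenvalue (cm W) l -> normc l < 1.

Lemma eigenvalue_roots k (W : 'M[R]_k) :
  {rs : seq R[i] | forall l, eigenvalue (cm W) l <-> l \in rs}.
Proof.
have [rs] := closed_field_poly_normal (char_poly (cm W)).
rewrite (monicP (char_poly_monic _)) scale1r => charE.
by exists rs => l; rewrite eigenvalue_root_char charE root_prod_XsubC.
Qed.

Lemma spectral_radius_lt1P k (W : 'M[R]_k) :
  spectral_radius W < 1 <-> spectrum_lt1 W.
Proof.
rewrite /spectral_radius; set S := [set _ | _].
have [rs eigE] := eigenvalue_roots W.
split=> [rho_lt1 l eig_l|eig_lt1].
  have S_ub : has_ubound S.
    exists (\sum_(z <- rs) normc z) => _ [l' [/eigE l'_rs <-]].
    rewrite (big_rem _ l'_rs) /= lerDl.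
    by apply: sumr_ge0 => ? _; exact: normc_ge0.
  by apply: le_lt_trans rho_lt1; apply: (ub_le_sup S_ub); exists l.
have [->|/set0P S_neq0] := eqVneq S set0; first by rewrite sup0 ltr01.
apply: (le_lt_trans (ge_sup S_neq0 (x := \big[Order.max/0]_(z <- rs) normc z) _)).
  by move=> _ [l [/eigE l_rs <-]]; apply: le_bigmax_seq.
by rewrite big_seq; apply: bigmax_lt => // z /eigE; exact: eig_lt1.
Qed.

Lemma spectrum_lt1N k (W : 'M[R]_k) : spectrum_lt1 (- W) <-> spectrum_lt1 W.
Proof.
suff spectrumN (V : 'M[R]_k) : spectrum_lt1 V -> spectrum_lt1 (- V).
  by split=> [/spectrumN|/spectrumN //]; rewrite opprK.
move=> V_lt1 l /eigenvalueP[u uV u_neq0]; rewrite -normcN; apply: V_lt1.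
apply/eigenvalueP; exists u => //.
by move: uV; rewrite map_mxN mulmxN scaleNr => <-; rewrite opprK.
Qed.

Lemma spectrum_lt1_unitmx k (W : 'M[R]_k) : spectrum_lt1 W -> 1%:M + W \in unitmx.
Proof.
move=> W_lt1; rewrite unitmxE unitfE; apply/negP => /eqP det0.
have /det0P[z z_neq0] : \det (cm (1%:M + W)) == 0 by rewrite det_map_mx det0 rmorph0.
rewrite map_mxD map_mx1 mulmxDr mulmx1 => /eqP; rewrite addrC addr_eq0 => /eqP zW.
suff /W_lt1 : eigenvalue (cm W) (-1) by rewrite normcN Normc.normc1 ltxx.
by apply/eigenvalueP; exists z; rewrite // scaleN1r.
Qed.

Lemma spectral_radius_lt1_unitmx k (W : 'M[R]_k) :
  spectral_radius W < 1 -> 1%:M + W \in unitmx.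
Proof. by move/spectral_radius_lt1P; exact: spectrum_lt1_unitmx. Qed.

Lemma normc_real (x : R) : normc (real_complex R x) = `|x|.
Proof. by rewrite /Normc.normc /= expr0n /= addr0 sqrtr_sqr. Qed.

Lemma mx_entry_le_norm k l (M : 'M[R]_(k, l)) i j : `|M i j| <= `|M|.
Proof.
rewrite [leRHS]/Num.norm /= mx_normrE.
exact: (le_bigmax 0 (fun ij : 'I_k * 'I_l => `|M ij.1 ij.2|) (i, j)).
Qed.

Lemma mx_norm_le_normc1 k l (M : 'M[R]_(k, l)) : `|M| <= mx_normc1 (cm M).
Proof.
rewrite [leLHS]/Num.norm /= mx_normrE; apply: bigmax_le => [|[i j] _].
  exact: mx_normc1_ge0.
by have := normc_le_mx_normc1 (cm M) i j; rewrite mxE normc_real.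
Qed.

Lemma spectrum_lt1_powers_cvg0 k (A : 'M[R]_k.+1) : spectrum_lt1 A ->
  forall v : 'cV[R]_k.+1, (fun t => A ^+ t *m v) @ \oo --> (0 : 'cV[R]_k.+1).
Proof.
move=> A_lt1 v; apply/norm_cvg0P.
apply: (squeeze_cvgr _ (cvg_cst (0 : R)) (mx_normc1_powers_cvg0 A_lt1 (cm v))).
by near=> t; rewrite normr_ge0 -rmorphXn -map_mxM mx_norm_le_normc1.
Unshelve. all: end_near.
Qed.

Lemma normc_row_mulmx_le k (z : 'rV[R[i]]_k) (M : 'M[R]_k) j :
  normc ((z *m cm M) 0 j) <= (\sum_i normc (z 0 i)) * `|col j M|.
Proof.
rewrite mxE mulr_suml; apply: le_trans (normc_sum _ _) _; apply: ler_sum => i _.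
rewrite Normc.normcM mxE normc_real ler_wpM2l ?normc_ge0 //.
by have := mx_entry_le_norm (col j M) i 0; rewrite mxE.
Qed.

Lemma powers_cvg0_spectrum_lt1 k (A : 'M[R]_k.+1) :
  (forall v : 'cV[R]_k.+1, (fun t => A ^+ t *m v) @ \oo --> (0 : 'cV[R]_k.+1)) -> spectrum_lt1 A.
Proof.
(* a left eigenvector z for |l| >= 1 keeps the j-th entry of z A^t = l^t z above |z_j| > 0 *)
move=> A_cvg0 l /eigenvalueP[z zA z_neq0]; rewrite ltNge; apply/negP => l_ge1.
have /existsP[j zj_neq0] : [exists j, z 0 j != 0].
  apply: contraR z_neq0 => /existsPn z0; apply/eqP/rowP => j.
  by rewrite mxE; move/negPn/eqP: (z0 j).
have zAt t : z *m cm (A ^+ t) = l ^+ t *: z.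
  elim: t => [|t IHt]; first by rewrite expr0 map_mx1 mulmx1 scale1r.
  by rewrite exprSr rmorphM /= mulmxA IHt -scalemxAl zA scalerA -exprSr.
set c := normc (z 0 j); set K := \sum_i normc (z 0 i).
have c_gt0 : 0 < c.
  by rewrite lt_def normc_ge0 andbT; apply: contra zj_neq0 => /eqP/Normc.eq0_normc ->.
have K_ge0 : 0 <= K by apply: sumr_ge0 => ? _; exact: normc_ge0.
have c_le t : c <= K * `|col j (A ^+ t)|.
  apply: le_trans (normc_row_mulmx_le _ _ _); rewrite zAt mxE Normc.normcM normcX.
  by rewrite ler_peMl ?normc_ge0 // exprn_ege1.
have col_cvg0 : (fun t => col j (A ^+ t)) @ \oo --> (0 : 'cV[R]_k.+1).
  by under eq_fun do rewrite colE; exact: A_cvg0.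
have norm_cvg0 : (fun t => `|col j (A ^+ t)|) @ \oo --> (0 : R) by apply/norm_cvg0P.
have [T _ small] := cvgr_lt 0 norm_cvg0 _ (divr_gt0 c_gt0 (ltr_wpDl K_ge0 ltr01)).
have /= := small T (leqnn T); rewrite ltr_pdivlMr ?ltr_wpDl //.
have := c_le T; have := normr_ge0 (col j (A ^+ T)); nra.
Qed.

End RealMatrixSpectrum.

Section AffineIteration.
Variables (R : realType) (k : nat).
Implicit Types (r x y : 'cV[R]_k.+1) (W : 'M[R]_k.+1).

Lemma lin_fixpointE r W y : y = r - W *m y <-> (1%:M + W) *m y = r.
Proof. by rewrite mulmxDl mul1mx; split=> [{1}->|<-]; rewrite ?addrK ?subrK. Qed.

Lemma lin_fixpointP r W y : 1%:M + W \in unitmx ->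
  y = r - W *m y <-> y = invmx (1%:M + W) *m r.
Proof. by move=> W1_unit; rewrite lin_fixpointE; split=> [<-|->]; rewrite ?mulKmx ?mulKVmx. Qed.

Lemma lin_iter_fixpointE r W x (x0 : 'cV[R]_k.+1) t : (1%:M + W) *m x = r ->
  lin_iter r W x0 t = x + (- W) ^+ t *m (x0 - x).
Proof.
move=> x_fix; have r_eq : r = x + W *m x by rewrite -x_fix mulmxDl mul1mx.
elim: t => [|t IHt]; first by rewrite expr0 mul1mx addrC subrK.
rewrite /lin_iter iterS -/(lin_iter r W x0 t) IHt r_eq mulmxDr exprS -mulmxE -mulmxA.
by rewrite mulNmx opprD addrA addrK.
Qed.

Lemma lin_iter_cvg r W x (x0 : 'cV[R]_k.+1) :
  spectral_radius W < 1 -> (1%:M + W) *m x = r -> lin_iter r W x0 @ \oo --> x.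
Proof.
move=> /spectral_radius_lt1P; rewrite -spectrum_lt1N => W_lt1 x_fix.
rewrite (funext (fun t => lin_iter_fixpointE x0 t x_fix)).
rewrite -[X in _ --> X]addr0; apply: cvgD; first exact: cvg_cst.
exact: spectrum_lt1_powers_cvg0.
Qed.

Lemma lin_iter_cvg_spectral_radius_lt1 r W x : (1%:M + W) *m x = r ->
  (forall x0 : 'cV[R]_k.+1, lin_iter r W x0 @ \oo --> x) -> spectral_radius W < 1.
Proof.
move=> x_fix iter_cvg; apply/spectral_radius_lt1P; rewrite -spectrum_lt1N.
apply: powers_cvg0_spectrum_lt1 => v.
have -> : (fun t => (- W) ^+ t *m v) = (fun t => lin_iter r W (x + v) t - x).
  by apply: funext => t; rewrite (lin_iter_fixpointE _ _ x_fix) [x + v]addrC addrK addrC addKr.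
by rewrite -(subrr x); apply: cvgB => //; exact: cvg_cst.
Qed.

End AffineIteration.

Lemma Qmx_add_Rmx {R : realType} b (q : 'I_b -> bool) : Qmx R q + Rmx R q = 1%:M.
Proof. by apply/matrixP => i j; rewrite !mxE; case: eqP; rewrite ?mulr1n ?mulr0n ?subrK ?addr0. Qed.

Lemma damped_add1mxE (F : comPzRingType) b (Q P Om : 'M[F]_b) (a1 a2 : F) :
  Q + P = 1%:M -> a1 + a2 = 1 ->
  1%:M + (Q *m Om + a2 *: (P *m Om) - a1 *: P) = (Q + a2 *: P) *m (1%:M + Om).
Proof.
move=> QP a12; rewrite mulmxDr mulmx1 mulmxDl -scalemxAl -QP.
have -> : a1 = 1 - a2 by rewrite -a12 addrK.
move: (Q *m Om) (P *m Om) => QOm POm.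
by apply/matrixP => i j; rewrite !mxE; ring.
Qed.

Theorem theorem3 (R : realType) (n m b : nat)
  (fac : 'I_b -> 'I_m) (var : 'I_b -> 'I_n)
  (c : 'I_b -> R) (lam mu : 'I_n -> R) (vs : 'I_b -> R) (res : 'I_m -> R)
  (q : 'I_b -> bool) (a1 : R) :
  (0 < b)%N ->
  edges_grouped fac -> edges_simple fac var -> factors_nonisolated fac ->
  (forall e, c e != 0) -> (forall j, 0 < lam j) -> (forall e, 0 < vs e) ->
  0 < a1 < 1 ->
  let a2 := 1 - a1 in
  let Om := Omegamx fac var c lam vs in
  let rt := rtilde fac var c lam mu vs res in
  let rbar := (Qmx R q + a2 *: Rmx R q) *m rt in
  let Ombar := Qmx R q *m Om + a2 *: (Rmx R q *m Om) - a1 *: Rmx R q in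
  ((exists rhat : 'cV[R]_b,
      (forall y : 'cV[R]_b, y = rbar - Ombar *m y <-> y = rhat) /\
      (forall r0 : 'cV[R]_b, lin_iter rbar Ombar r0 @ \oo --> rhat))
   <-> spectral_radius Ombar < 1)
  /\
  (spectral_radius Ombar < 1 ->
     (1%:M + Om) \in unitmx /\
     forall r0 : 'cV[R]_b,
       lin_iter rbar Ombar r0 @ \oo --> invmx (1%:M + Om) *m rt).
Proof.
move: fac var c vs q; case: b => [//|k] fac var c vs q _ _ _ _ _ _ _ _ a2 Om rt rbar Ombar.
have a12 : a1 + a2 = 1 by rewrite /a2 addrC subrK.
have damped_factor := damped_add1mxE Om (Qmx_add_Rmx q) a12.
split.
  split=> [[rhat [rhat_fix iter_cvg]]|rho_lt1].
    apply: lin_iter_cvg_spectral_radius_lt1 iter_cvg.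
    exact/lin_fixpointE/(rhat_fix rhat).2.
  have Ombar_unit := spectral_radius_lt1_unitmx rho_lt1.
  exists (invmx (1%:M + Ombar) *m rbar); split=> [y|r0]; first exact: lin_fixpointP.
  by apply: lin_iter_cvg; rewrite ?mulKVmx.
move=> rho_lt1; have := spectral_radius_lt1_unitmx rho_lt1.
rewrite damped_factor unitmx_mul => /andP[_ Om_unit]; split=> // r0.
by apply: lin_iter_cvg; rewrite // damped_factor -mulmxA mulKVmx.
Qed.
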